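(* Let $C_0>0$. There exist $\delta>0$ and $C>0$ such that for every $n\in\mathbb Z\setminus\{0\}$ and every dyadic number $M\ge1$, the Lebesgue measure of the set $$\{\mu\in\mathbb R:\ M/2\le|\mu|\le2M,\ \exists\, n_1,n_2\in\mathbb Z\setminus\{0\}\text{ with } n_1+n_2=n \text{ and } |\mu+3nn_1n_2|\le C_0\langle nn_1n_2\rangle^{1/100}\}$$ is at most $CM^{1-\delta}$.
   Context: $\langle x\rangle=1+|x|$. A dyadic number is one of the form $2^j$, $j\in\mathbb Z_{\ge0}$. *)

From HB Require Import structures.
From mathcomp Require Import all_boot all_order all_algebra.
From mathcomp Require Import all_classical all_reals all_analysis.
Set Implicit Arguments. Unset Strict Implicit. Unset Printing Implicit Defensive.
Import Order.TTheory GRing.Theory Num.Theory.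
Local Open Scope classical_set_scope.
Local Open Scope ring_scope.

(* Japanese bracket <x> = 1 + |x| *)
Definition jbr {R : realType} (x : R) : R := 1 + `|x|.

Definition badset {R : realType} (C0 : R) (n : int) (M : R) : set R :=
  [set mu : R | M / 2 <= `|mu| <= 2 * M /\
     exists n1 n2 : int, [/\ n1 != 0, n2 != 0, n1 + n2 = n &
       `|mu + 3 * (n * n1 * n2)%:~R| <= C0 * jbr ((n * n1 * n2)%:~R) `^ (1 / 100)]].

From HB Require Import structures.
From mathcomp Require Import all_boot all_order all_algebra.
From mathcomp Require Import all_classical all_reals all_analysis.
From mathcomp Require Import measurable_realfun lra ring zify.
Import Order.TTheory GRing.Theory Num.Theory numFieldNormedType.Exports.
Local Open Scope classical_set_scope.
Local Open Scope ring_scope.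

(* Put K := n n1 n2. If |mu| <= 2M and mu lies within C0 <K>^(1/100) of -3K,
   then 3|K| <= 2M + C0 <K>^(1/100) forces <K> = O(M). Hence the window around
   -3K has radius O(M^(1/4)), and since |n1 n2| <= |K| the smaller of |n1|, |n2|
   is O(M^(1/2)). As K = n a (n - a) is determined by either factor a of the
   pair, the set is covered by O(M^(1/2)) windows of length O(M^(1/4)), which
   gives delta = 1/4. *)

Section real_estimates.
Context {R : realType}.

Lemma jbr_ge1 (x : R) : 1 <= jbr x.
Proof. by rewrite lerDl. Qed.

Lemma powR_invnK (x : R) (k : nat) : 0 <= x -> (0 < k)%N ->
  (x `^ (1 / k%:R)) ^+ k = x.
Proof.
move=> x0 k0; rewrite -powR_mulrn ?powR_ge0 // -powRrM mul1r mulVf ?powRr1 //.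
by rewrite pnatr_eq0 -lt0n.
Qed.

Lemma powR_le_quarter {x X p : R} : 1 <= x -> p <= 1 / 4 -> x <= X ->
  x `^ p <= X `^ (1 / 4).
Proof.
move=> x1 p4 xX; apply: le_trans (ler_powR x1 p4) _.
by apply: ge0_ler_powR; rewrite ?nnegrE //; lra.
Qed.

Lemma small_factor_le_truncn (a b : int) (X : R) : 0 <= X ->
  (`|a| * `|b|)%:R <= X ^+ 2 -> (`|a| <= Num.truncn X)%N || (`|b| <= Num.truncn X)%N.
Proof.
move=> X0; wlog ab : a b / (`|a| <= `|b|)%N => [hwlog|].
  case: (leqP `|a| `|b|) => [|/ltnW] h; first exact: hwlog.
  by rewrite mulnC orbC; exact: hwlog.
move=> h; apply/orP; left; rewrite truncn_ge_nat //.
rewrite -(@ler_pXn2r _ 2) ?nnegrE //; apply: le_trans h.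
by rewrite -natrX ler_nat expnS expn1 leq_mul2l ab orbT.
Qed.

Lemma near_resonance_jbr_le (C0 M K mu p : R) : 0 < C0 -> 1 <= M -> p <= 1 / 2 ->
  `|mu| <= 2 * M -> `|mu + 3 * K| <= C0 * jbr K `^ p -> jbr K <= (C0 ^+ 2 + 3) * M.
Proof.
move=> C0p M1 p2 hmu hK.
have x1 := jbr_ge1 K; set x := jbr K in hK x1 *; set y := x `^ p in hK *.
have y0 : 0 < y by apply: powR_gt0; lra.
have yx : y ^+ 2 <= x.
  rewrite -powR_mulrn ?powR_ge0 // -powRrM -[leRHS]powRr1; last lra.
  by apply: ler_powR => //; lra.
have K3 : 3 * `|K| <= C0 * y + 2 * M.
  have -> : 3 * `|K| = `|(mu + 3 * K) - mu| by rewrite addrC addKr normrM gtr0_norm.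
  by apply: le_trans (ler_normB _ _) _; apply: lerD.
have xK : x = 1 + `|K| by [].
have CM : C0 ^+ 2 <= C0 ^+ 2 * M by rewrite ler_peMr ?sqr_ge0.
clearbody x y; rewrite expr2 in yx CM.
nra.
Qed.
End real_estimates.

Lemma closed_ball_normE (R : realFieldType) (c r : R) :
  0 < r -> closed_ball c r = [set x | `|x - c| <= r].
Proof.
by move=> r0; rewrite closed_ballE //; apply/seteqP; split => x; rewrite /= distrC.
Qed.

Section badset.
Variables (R : realType) (C0 : R) (n : int).
Hypothesis C0_gt0 : 0 < C0.

Let resonance (a : int) : R := (n * a * (n - a))%:~R.
Let radius (a : int) : R := C0 * jbr (resonance a) `^ (1 / 100).

Let radius_gt0 a : 0 < radius a.
Proof. by rewrite mulr_gt0 // powR_gt0 // (lt_le_trans ltr01 (jbr_ge1 _)). Qed.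

Let window (a : int) : set R :=
  if (a != 0) && (n - a != 0) then closed_ball (- 3 * resonance a) (radius a)
  else set0.

Lemma badsetE (M : R) :
  badset C0 n M = Num.norm @^-1` `[M / 2, 2 * M] `&` \bigcup_a window a.
Proof.
apply/seteqP; split => mu /=.
  move=> [hM [n1 [n2 [n10 n20 hn hK]]]]; split; first by rewrite in_itv.
  have n2E : n2 = n - n1 by rewrite -hn addrC addKr.
  rewrite n2E in n20 hK; exists n1 => //; rewrite /window n10 n20.
  by rewrite closed_ball_normE // mulNr opprK.
rewrite in_itv => -[hM [a _]]; rewrite /window.
case: ifP => // /andP[a0 na0]; rewrite closed_ball_normE // mulNr opprK => hK.
by split => //; exists a, (n - a); split => //; rewrite addrC subrK.
Qed.

Lemma measurable_badset (M : R) : measurable (badset C0 n M).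
Proof.
rewrite badsetE; apply: measurableI.
  by rewrite -[X in measurable X]setTI; apply: normr_measurable.
apply: countable_bigcupT_measurable; first exact: countableP.
by move=> a; rewrite /window; case: ifP => _; [exact: measurable_closed_ball|].
Qed.

Hypothesis n_neq0 : n != 0.
Variable M : R.
Hypothesis M_ge1 : 1 <= M.

Let E := C0 ^+ 2 + 3.
Let rho := C0 * E * M `^ (1 / 4).
Let N := Num.truncn (E * M `^ (1 / 2)).

Let M_gt0 : 0 < M. Proof. exact: lt_le_trans ltr01 M_ge1. Qed.
Let E_ge1 : 1 <= E. Proof. by rewrite /E; have := sqr_ge0 C0; lra. Qed.
Let E_gt0 : 0 < E. Proof. exact: lt_le_trans ltr01 E_ge1. Qed.
Let rho_gt0 : 0 < rho. Proof. by rewrite !mulr_gt0 ?powR_gt0. Qed.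

Lemma radius_le_rho {K : R} : jbr K <= E * M -> C0 * jbr K `^ (1 / 100) <= rho.
Proof.
move=> KM; rewrite /rho -mulrA ler_pM2l //.
have p4 : (1 / 100 : R) <= 1 / 4 by lra.
apply: le_trans (powR_le_quarter (jbr_ge1 K) p4 KM) _.
have q1 : (1 / 4 : R) <= 1 by lra.
by rewrite powRM ?ler_pM2r ?powR_gt0 ?ler1_powR // ltW.
Qed.

Lemma resonance_small_factor {n1 n2 : int} : jbr (n * n1 * n2)%:~R <= E * M ->
  (`|n1| <= N)%N || (`|n2| <= N)%N.
Proof.
move=> KM; apply: small_factor_le_truncn; first by rewrite mulr_ge0 ?powR_ge0 // ltW.
have M2 : (M `^ (1 / 2)) ^+ 2 = M by rewrite powR_invnK // ltW.
have nK : (`|n1| * `|n2|)%:R <= `|(n * n1 * n2)%:~R : R|.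
  by rewrite -intr_norm -natr_absz ler_nat !abszM -mulnA leq_pmull ?absz_gt0.
have Kj : `|(n * n1 * n2)%:~R : R| <= jbr (n * n1 * n2)%:~R by rewrite lerDr.
have EE : E <= E ^+ 2 by rewrite expr2 ler_peMl // ltW.
rewrite exprMn M2; apply: le_trans nK (le_trans Kj (le_trans KM _)).
by rewrite ler_wpM2r // ltW.
Qed.

Lemma badset_near_small_resonance mu : badset C0 n M mu ->
  exists2 a : int, (`|a| <= N)%N & closed_ball (- 3 * resonance a) rho mu.
Proof.
move=> [/andP[_ hmu] [n1 [n2 [_ _ hn hK]]]].
have KM : jbr (n * n1 * n2)%:~R <= E * M.
  by apply: near_resonance_jbr_le hmu hK => //; lra.
have rK := radius_le_rho KM.
have ball a : (n * n1 * n2)%:~R = resonance a ->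
    closed_ball (- 3 * resonance a) rho mu.
  by move=> <-; rewrite closed_ball_normE // mulNr opprK; exact: le_trans hK rK.
by case/orP: (resonance_small_factor KM) => small;
  [exists n1 | exists n2] => //; apply: ball;
  rewrite /resonance -hn; congr (_ %:~R); ring.
Qed.

Let ball_at (k : nat) : set R := closed_ball (- 3 * resonance (k%:Z - N%:Z)) rho.

Lemma badset_sub_balls : badset C0 n M `<=` \big[setU/set0]_(k < (2 * N).+1) ball_at k.
Proof.
move=> mu /badset_near_small_resonance[a aN ha]; rewrite -bigcup_mkord.
exists `|(a + N%:Z)%R|%N; first by rewrite /=; lia.
by rewrite /ball_at (_ : `|(a + N%:Z)%R|%:Z - N%:Z = a) //; lia.
Qed.

Lemma badset_measure_le :
  (lebesgue_measure (badset C0 n M) <= (6 * C0 * E ^+ 2 * M `^ (3 / 4))%:E)%E.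
Proof.
apply: le_trans (content_subadditive lebesgue_measure _ (measurable_badset M)
  badset_sub_balls) _.
  by move=> k _; exact: measurable_closed_ball.
rewrite (eq_bigr (fun=> (rho *+ 2)%:E)); last first.
  by move=> k _; exact: lebesgue_measure_closed_ball (ltW rho_gt0).
rewrite sumEFin sumr_const card_ord lee_fin.
have -> : M `^ (3 / 4) = M `^ (1 / 4) * M `^ (1 / 2).
  have e : (3 / 4 : R) = 1 / 4 + 1 / 2 by lra.
  by rewrite -powRD ?(gt_eqF M_gt0) ?implybT // e.
have N_le : N%:R <= E * M `^ (1 / 2).
  by rewrite truncn_le mulr_ge0 ?powR_ge0 // ltW.
have EM_ge1 : 1 <= E * M `^ (1 / 2).
  have h0 : (0 : R) <= 1 / 2 by lra.
  have := ler_powR M_ge1 h0; rewrite powRr0 => v1.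
  by have := ler_pM ler01 ler01 E_ge1 v1; rewrite mulr1.
have count : (2 * (2 * N).+1)%N%:R <= 6 * (E * M `^ (1 / 2)).
  by rewrite mulnS natrD !natrM; lra.
rewrite -mulrnA -[X in X <= _]mulr_natl.
have -> : 6 * C0 * E ^+ 2 * (M `^ (1 / 4) * M `^ (1 / 2)) =
    6 * (E * M `^ (1 / 2)) * rho by rewrite /rho; ring.
by rewrite ler_pM2r.
Qed.

End badset.

Theorem lemmaA1 (R : realType) (C0 : R) (hC0 : 0 < C0) :
  exists delta C : R, [/\ 0 < delta, 0 < C &
    forall (n : int) (j : nat), n != 0 ->
      let M : R := 2 ^+ j in
      measurable (badset C0 n M) /\
      (lebesgue_measure (badset C0 n M) <= (C * M `^ (1 - delta))%:E)%E].
Proof.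
exists (1 / 4), (6 * C0 * (C0 ^+ 2 + 3) ^+ 2); split.
- by rewrite divr_gt0.
- have E_gt0 : 0 < C0 ^+ 2 + 3 by rewrite ltr_wpDl ?sqr_ge0.
  by rewrite mulr_gt0 ?exprn_gt0 ?mulr_gt0.
move=> n j n_neq0 M; split; first exact: measurable_badset.
have -> : 1 - 1 / 4 = 3 / 4 :> R by lra.
by apply: badset_measure_le => //; rewrite exprn_ege1 // ler1n.
Qed.
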